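(* For cycles we have $f^-(C_3)=f^-(C_5)=0$, and for every odd $n\ge 7$, $f^-(C_n)=n-5$.
   Context: All graphs are finite, simple, undirected and connected. $N[v]=N(v)\cup\{v\}$ is the closed neighbourhood. A chromatic colouring of $G$ is a proper vertex colouring $c:V(G)\to\{c_1,\dots,c_{\chi(G)}\}$. With respect to $c$, a vertex $v$ yields a rainbow neighbourhood if $N[v]$ contains a vertex of each colour $c_1,\dots,c_{\chi(G)}$; $r_\chi(G)$ is the number of such vertices, and $r^-_\chi(G)$, $r^+_\chi(G)$ are its minimum and maximum over all chromatic colourings of $G$. Fading: for a set $F\subseteq V(G)$ (a fade set), the vertices of $F$ receive a transparent colour $c^\circ$ not among $c_1,\dots,c_{\chi(G)}$; after fading, $v$ yields a rainbow neighbourhood iff for every $i$ some vertex of $N[v]\setminus F$ has colour $c_i$. The fading number $f^-(G)$ is the maximum $|F|$ over chromatic colourings $c$ attaining $r_\chi=r^-_\chi(G)$ and fade sets $F$ such that, after fading $F$, the number of vertices yielding rainbow neighbourhoods is still $r^-_\chi(G)$; $f^+(G)$ is defined analogously with $r^+_\chi(G)$. *)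

From mathcomp Require Import all_boot.
Set Implicit Arguments. Unset Strict Implicit. Unset Printing Implicit Defensive.

(* A graph is a relation e on a finite type (the paper's graphs are simple:
   e symmetric and irreflexive; the cycles below are such graphs). *)
Section Fading.
Variables (T : finType) (e : rel T).

Definition proper_col (k : nat) (c : {ffun T -> 'I_k}) : bool :=
  [forall x, forall y, e x y ==> (c x != c y)].

Definition colorable (k : nat) : bool := [exists c : {ffun T -> 'I_k}, proper_col c].

Definition chi : nat := \big[minn/#|T|]_(k < #|T|.+1 | colorable k) (k : nat).

Definition closed_nbr (v u : T) : bool := (u == v) || e v u.

Definition rainbow (c : {ffun T -> 'I_chi}) (F : {set T}) (v : T) : bool :=
  [forall i : 'I_chi, [exists u, [&& closed_nbr v u, u \notin F & c u == i]]].

Definition r_count (c : {ffun T -> 'I_chi}) (F : {set T}) : nat :=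
  #|[set v | rainbow c F v]|.

Definition r_minus : nat :=
  \big[minn/#|T|]_(c : {ffun T -> 'I_chi} | proper_col c) r_count c set0.

Definition f_minus : nat :=
  \max_(c : {ffun T -> 'I_chi} | proper_col c && (r_count c set0 == r_minus))
    \max_(F : {set T} | r_count c F == r_minus) #|F|.
End Fading.

Definition cycle_rel (n : nat) : rel 'I_n :=
  fun i j => (val j == (val i).+1 %% n) || (val i == (val j).+1 %% n).
Arguments cycle_rel n : clear implicits.

From mathcomp Require Import all_boot zify.
Set Implicit Arguments. Unset Strict Implicit. Unset Printing Implicit Defensive.

(* For a proper 3-colouring of an odd cycle, a vertex v yields a rainbow
   neighbourhood iff its neighbours ord_pred v and ordS v have different
   colours.  Along the cycle the colour increases by 1 or 2 (mod 3) at each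
   step, and the rainbow vertices are the places where two consecutive
   increments agree; since the increments sum to 0 mod 3 and n is odd, there
   are at least three such places, and colouring the vertices
   0, 1, 0, 1, ..., 0, 1, 2 gives exactly three.  A fade set that keeps r^-
   must avoid the closed neighbourhoods of at least three vertices, which
   cover at least min(n, 5) vertices; for the colouring above these
   neighbourhoods cover exactly 5 vertices, and everything else may fade. *)

Lemma bigminn_le_cond (I : finType) (P : pred I) (G : I -> nat) x j :
  P j -> \big[minn/x]_(i | P i) G i <= G j.
Proof.
move=> Pj; rewrite -big_filter.
have : j \in [seq i <- index_enum I | P i] by rewrite mem_filter Pj mem_index_enum.
elim: [seq i <- index_enum I | P i] => //= a l IHl; rewrite in_cons big_cons.
case/orP => [/eqP <-|/IHl]; first exact: geq_minl.
exact: leq_trans (geq_minr _ _).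
Qed.

(* The notions with the number of colours [k] as a parameter
   instead of [chi e], so that [chi e] can be rewritten to a numeral. *)
Section FadingWithColours.
Variables (T : finType) (e : rel T) (k : nat).

Definition rainbow_k (c : {ffun T -> 'I_k}) (F : {set T}) (v : T) : bool :=
  [forall i : 'I_k, [exists u, [&& closed_nbr e v u, u \notin F & c u == i]]].

Definition r_count_k (c : {ffun T -> 'I_k}) (F : {set T}) : nat :=
  #|[set v | rainbow_k c F v]|.

Definition r_minus_k : nat :=
  \big[minn/#|T|]_(c : {ffun T -> 'I_k} | proper_col e c) r_count_k c set0.

Definition f_minus_k : nat :=
  \max_(c : {ffun T -> 'I_k} | proper_col e c && (r_count_k c set0 == r_minus_k))
    \max_(F : {set T} | r_count_k c F == r_minus_k) #|F|.

Lemma rainbow_k_fade c F v : rainbow_k c F v -> rainbow_k c set0 v.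
Proof.
move=> /forallP Rv; apply/forallP => i; have /existsP [u /and3P [vu _ ci]] := Rv i.
by apply/existsP; exists u; rewrite vu inE ci.
Qed.

Lemma rainbow_k_unfaded c (F : {set T}) v :
  (forall u, closed_nbr e v u -> u \notin F) -> rainbow_k c F v = rainbow_k c set0 v.
Proof.
move=> unfaded; apply/idP/idP; first exact: rainbow_k_fade.
move=> /forallP Rv; apply/forallP => i; have /existsP [u /and3P [vu _ ci]] := Rv i.
by apply/existsP; exists u; rewrite vu unfaded.
Qed.

Lemma rainbow_set_fade c F :
  r_count_k c F = r_count_k c set0 ->
  [set v | rainbow_k c F v] = [set v | rainbow_k c set0 v].
Proof.
move=> eq_count; apply/eqP; rewrite eqEcard -/(r_count_k c set0) -eq_count leqnn andbT.
by apply/subsetP => v; rewrite !inE; apply: rainbow_k_fade.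
Qed.

Lemma r_minus_k_le c : proper_col e c -> r_minus_k <= r_count_k c set0.
Proof. exact: bigminn_le_cond. Qed.

Lemma r_minus_k_ge m : m <= #|T| ->
  (forall c, proper_col e c -> m <= r_count_k c set0) -> m <= r_minus_k.
Proof.
move=> mT mc; rewrite /r_minus_k; elim/big_ind: _ => // x y.
by rewrite leq_min => -> ->.
Qed.

Lemma leq_f_minus_k c F : proper_col e c -> r_count_k c set0 = r_minus_k ->
  r_count_k c F = r_minus_k -> #|F| <= f_minus_k.
Proof.
move=> c_proper c_min F_min; rewrite /f_minus_k.
apply: leq_trans (leq_bigmax_cond c _); last by rewrite c_proper c_min eqxx.
by apply: (leq_bigmax_cond F (P := fun F => r_count_k c F == r_minus_k)); apply/eqP.
Qed.

End FadingWithColours.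

Lemma f_minus_chi (T : finType) (e : rel T) : f_minus e = f_minus_k e (chi e).
Proof. by []. Qed.

Lemma colorable_widen (T : finType) (e : rel T) k m :
  k <= m -> colorable e k -> colorable e m.
Proof.
move=> km /existsP [c /forallP c_proper].
apply/existsP; exists [ffun x => widen_ord km (c x)].
apply/forallP => x; apply/forallP => y; rewrite !ffunE.
by apply/implyP => xy; move/forallP: (c_proper x) => /(_ y) /implyP /(_ xy).
Qed.

Lemma chi_eq (T : finType) (e : rel T) k : k <= #|T| -> colorable e k ->
  (forall j, j < k -> ~~ colorable e j) -> chi e = k.
Proof.
move=> kT k_col below_k; apply/anti_leq/andP; split.
  have kT' : k < #|T|.+1 by [].
  exact: (@bigminn_le_cond _ _ (fun j : 'I_#|T|.+1 => val j) _ (Ordinal kT')).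
rewrite /chi; elim/big_ind: _ => // [x y|j]; first by rewrite leq_min => -> ->.
by apply: contraTT; rewrite -ltnNge => /below_k.
Qed.

Lemma I3_cover (a b d i : 'I_3) :
  a != b -> b != d -> a != d -> [|| i == a, i == b | i == d].
Proof. by rewrite -!val_eqE; case: a b d i => [a ?] [b ?] [d ?] [i ?] /=; lia. Qed.

Lemma I3_avoid2 (a b : 'I_3) : exists i : 'I_3, (i != a) && (i != b).
Proof.
exists (inord (if a == b then (a + 1) %% 3 else 3 - a - b)).
rewrite -!val_eqE /= inordK; case: a b => [a ?] [b ?] /=;
  by case: (a =P b) => ?; try (apply/andP; split; apply/eqP); lia.
Qed.

Section Cycle.
Variable n : nat.
Local Notation s := (@ordS n).
Local Notation p := (@ord_pred n).
Local Notation E := (cycle_rel n).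

Lemma val_ordS i : val (s i) = if i.+1 == n then 0 else i.+1.
Proof.
rewrite /=; case: eqP => [->|ne]; first by rewrite modnn.
by rewrite modn_small //; move: (ltn_ord i) ne; lia.
Qed.

Lemma val_ord_pred i : val (p i) = if val i == 0 then n.-1 else (val i).-1.
Proof.
have lt_i := ltn_ord i; rewrite /=; case: eqP => [->|ne].
  by rewrite add0n modn_small //; lia.
have -> : (i + n).-1 = i.-1 + n by lia.
by rewrite modnDr modn_small //; lia.
Qed.

Lemma cycle_relE u v : E u v = (v == s u) || (v == p u).
Proof.
rewrite /cycle_rel -[v == s u]val_eqE /=; congr (_ || _).
apply/eqP/eqP => [uv|->]; last by rewrite -[_ %% n]/(val (s (p u))) ord_predK.
have -> : u = s v by apply: val_inj.
by rewrite ordSK.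
Qed.

Lemma closed_nbr_cycle v u : closed_nbr E v u = [|| u == p v, u == v | u == s v].
Proof. by rewrite /closed_nbr cycle_relE; do 3!case: (_ == _). Qed.

Lemma proper_col_cycle k (c : {ffun 'I_n -> 'I_k}) :
  proper_col E c = [forall x, c x != c (s x)].
Proof.
apply/forallP/forallP => c_proper x.
  by move/forallP: (c_proper x) => /(_ (s x)); rewrite cycle_relE eqxx.
apply/forallP => y; rewrite cycle_relE; apply/implyP => /orP [/eqP ->|/eqP ->] //.
by rewrite -{1}(ord_predK x) eq_sym.
Qed.

Lemma sum_ordS (G : 'I_n -> nat) : \sum_i G (s i) = \sum_i G i.
Proof. by rewrite [RHS](reindex_inj (@ordS_inj n)). Qed.

(* Adjacent colours of a 2-colouring add up to 1, so summing over all edges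
   gives [n = 2 * \sum_i c i]. *)
Lemma odd_cycle_not_colorable2 : odd n -> ~~ colorable E 2.
Proof.
move=> n_odd; apply/negP => /existsP [c]; rewrite proper_col_cycle => /forallP c_proper.
have sum_edges : \sum_i (val (c i) + val (c (s i))) = n.
  rewrite -[RHS]card_ord -sum1_card; apply: eq_bigr => i _.
  by have := c_proper i; rewrite -val_eqE; case: (c i) (c (s i)) => [a ?] [b ?] /=; lia.
move: n_odd; rewrite -sum_edges big_split /=.
by rewrite (sum_ordS (fun i => val (c i))) addnn odd_double.
Qed.

(* A vertex of a 3-coloured cycle has only three vertices in its closed
   neighbourhood, so it needs all of them, unfaded and pairwise
   differently coloured. *)
Lemma rainbow_cycleE (c : {ffun 'I_n -> 'I_3}) F v : proper_col E c ->
  rainbow_k E c F v = [&& c (p v) != c (s v), p v \notin F, v \notin F & s v \notin F].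
Proof.
rewrite proper_col_cycle => /forallP c_proper.
have cpv : c (p v) != c v by rewrite -{2}(ord_predK v).
have cvs := c_proper v.
apply/idP/and4P => [Rv|[cps pvF vF svF]]; last first.
  apply/forallP => i; apply/existsP.
  case/or3P: (I3_cover i cpv cvs cps) => /eqP ->.
  - by exists (p v); rewrite closed_nbr_cycle !eqxx pvF.
  - by exists v; rewrite closed_nbr_cycle !eqxx orbT vF.
  - by exists (s v); rewrite closed_nbr_cycle !eqxx !orbT svF.
have two_colours a b :
    (forall u, closed_nbr E v u -> u \notin F -> (c u == a) || (c u == b)) -> False.
  move=> ab; have [i /andP [ia ib]] := I3_avoid2 a b.
  have /existsP [u /and3P [vu uF /eqP cu]] := forallP Rv i.
  by move: (ab u vu uF); rewrite cu (negbTE ia) (negbTE ib).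
split; apply/negP => bad.
- apply: (two_colours (c v) (c (s v))) => u.
  by rewrite closed_nbr_cycle => /or3P [] /eqP -> _; rewrite ?(eqP bad) eqxx ?orbT.
- apply: (two_colours (c v) (c (s v))) => u.
  by rewrite closed_nbr_cycle => /or3P [] /eqP ->; rewrite ?bad // eqxx ?orbT.
- apply: (two_colours (c (p v)) (c (s v))) => u.
  by rewrite closed_nbr_cycle => /or3P [] /eqP ->; rewrite ?bad // eqxx ?orbT.
- apply: (two_colours (c (p v)) (c v)) => u.
  by rewrite closed_nbr_cycle => /or3P [] /eqP ->; rewrite ?bad // eqxx ?orbT.
Qed.

Lemma ordS_closed (X : {set 'I_n}) x : x \in X -> s @: X \subset X -> X = setT.
Proof.
move=> Xx sX; apply/setP => z; rewrite inE.
have iterX k : iter k s x \in X.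
  by elim: k => //= k IHk; apply: (subsetP sX); apply: imset_f.
have val_iter k : val (iter k s x) = (x + k) %% n.
  elim: k => [|k IHk]; first by rewrite addn0 modn_small.
  by rewrite iterS /= IHk -addn1 modnDml -addnA addn1.
have -> : z = iter (z + n - x) s x.
  apply: val_inj; rewrite val_iter.
  by rewrite (_ : x + _ = z + n) ?modnDr ?modn_small //; move: (ltn_ord x); lia.
exact: iterX.
Qed.

Lemma ord_pred_closed (X : {set 'I_n}) x : x \in X -> p @: X \subset X -> X = setT.
Proof.
move=> Xx pX; apply: (ordS_closed Xx).
have pXE : p @: X = X.
  by apply/eqP; rewrite eqEcard pX (card_imset _ (@ord_pred_inj n)) /=.
by rewrite -{1}pXE -imset_comp (eq_imset _ (@ord_predK n)) imset_id.
Qed.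

Definition cycle_nbhd (R : {set 'I_n}) : {set 'I_n} := R :|: s @: R :|: p @: R.

(* Unless it is the whole cycle, a set is not closed under a rotation, so
   adding first the [s]-image and then the [p]-image gains a vertex each time. *)
Lemma card_cycle_nbhd (R : {set 'I_n}) : 3 <= #|R| -> minn n 5 <= #|cycle_nbhd R|.
Proof.
move=> R_ge3; set Y := R :|: s @: R.
have nbhdE : cycle_nbhd R = Y :|: p @: Y.
  rewrite imsetU -imset_comp (eq_imset _ (@ordSK n)) imset_id setUA.
  by apply/esym/setUidPl; rewrite -setUA subsetUl.
have [x Rx] : exists x, x \in R by apply/card_gt0P; apply: leq_trans R_ge3.
have [Y_full|Y_part] := eqVneq Y setT.
  by rewrite nbhdE Y_full setTU cardsT card_ord geq_minl.
have R_lt_Y : #|R| < #|Y|.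
  rewrite (ltn_leqif (subset_leqif_cards (subsetUl _ _))).
  apply: contra Y_part => /eqP R_eq.
  have /(ordS_closed Rx) R_full : s @: R \subset R by rewrite {2}R_eq subsetUr.
  by rewrite /Y R_full setTU.
have Y_lt_nbhd : #|Y| < #|cycle_nbhd R|.
  rewrite nbhdE (ltn_leqif (subset_leqif_cards (subsetUl _ _))).
  apply: contra Y_part => /eqP Y_eq; apply/eqP/(@ord_pred_closed _ x).
    by rewrite inE Rx.
  by rewrite {2}Y_eq subsetUr.
apply: leq_trans (geq_minr _ _) _; lia.
Qed.

Lemma closed_nbr_cycle_nbhd (R : {set 'I_n}) v u :
  v \in R -> closed_nbr E v u -> u \in cycle_nbhd R.
Proof.
move=> Rv; rewrite closed_nbr_cycle !inE.
by case/or3P => /eqP ->; rewrite ?Rv ?imset_f ?orbT.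
Qed.

Hypothesis n_ge3 : 3 <= n.
Hypothesis n_odd : odd n.

Definition alt_col : {ffun 'I_n -> 'I_3} :=
  [ffun i => inord (if val i == n.-1 then 2 else val i %% 2)].

Lemma val_alt_col i : val (alt_col i) = if val i == n.-1 then 2 else val i %% 2.
Proof.
by rewrite ffunE /= inordK //; case: ifP => // _; rewrite ltnS ltnW // ltn_mod.
Qed.

Lemma alt_col_proper : proper_col E alt_col.
Proof.
rewrite proper_col_cycle; apply/forallP => i; rewrite -val_eqE !val_alt_col val_ordS.
apply/eqP; case: i => i lt_i /=.
by case: (i.+1 =P n) => ?; repeat (case: ifP => /eqP ?); lia.
Qed.

Lemma chi_cycle : chi E = 3.
Proof.
apply: chi_eq; first by rewrite card_ord.
  by apply/existsP; exists alt_col; apply: alt_col_proper.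
move=> j lt_j3; apply: contraNN (odd_cycle_not_colorable2 n_odd).
exact: colorable_widen.
Qed.

(* Writing [t] for the number of switches of [b] along the cycle, [a] and [a']
   for the numbers of agreements on [true] and on [false]: [n = a + a' + 2t]
   is odd, while [n + #|~~ b| = a + 2a' + 3t]; hence [a + a'] is odd and
   [a = a' %[mod 3]], which forces [a + a' >= 3]. *)
Lemma cycle_agreements_ge3 (b : pred 'I_n) :
  3 %| n + #|[set i | ~~ b i]| -> 3 <= #|[set i | b i == b (s i)]|.
Proof.
set U := [set i | b i]; set S := s @^-1: U.
have -> : [set i | ~~ b i] = ~: U by apply/setP => i; rewrite !inE.
have cardS : #|S| = #|U| by rewrite card_preimset //; apply: ordS_inj.
have cardU := cardsID S U; have cardS' := cardsID U S; rewrite setIC in cardS'.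
have cardUC := cardsID S (~: U).
rewrite (_ : ~: U :&: S = S :\: U) in cardUC; last by rewrite setDE setIC.
have agree := cardsID U [set i | b i == b (s i)].
rewrite (_ : [set i | b i == b (s i)] :&: U = U :&: S) in agree; last first.
  by apply/setP => i; rewrite !inE; case: (b i); case: (b (s i)).
rewrite (_ : [set i | b i == b (s i)] :\: U = ~: U :\: S) in agree; last first.
  by apply/setP => i; rewrite !inE; case: (b i); case: (b (s i)).
have := cardsC U; rewrite card_ord; lia.
Qed.

Section ProperColouring.
Variable c : {ffun 'I_n -> 'I_3}.
Hypothesis c_proper : proper_col E c.

Definition col_up i : bool := val (c (s i)) == (val (c i)).+1 %% 3.

Lemma val_col_succ i : val (c (s i)) = (c i + (1 + ~~ col_up i)) %% 3.
Proof.
move: c_proper; rewrite proper_col_cycle => /forallP /(_ i).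
rewrite /col_up -val_eqE; case: (c i) (c (s i)) => [x ?] [y ?] /=.
by case: eqP => /= ? ?; lia.
Qed.

(* Summing the colour increments around the cycle gives [0 mod 3]. *)
Lemma col_down_dvd3 : 3 %| n + #|[set i | ~~ col_up i]|.
Proof.
have sum_succ : \sum_i val (c (s i)) = \sum_i (c i + (1 + ~~ col_up i)) %[mod 3].
  rewrite -modn_summ -[RHS]modn_summ; congr (_ %% 3).
  by apply: eq_bigr => i _; rewrite val_col_succ modn_mod.
have sum_down : \sum_i (~~ col_up i : nat) = #|[set i | ~~ col_up i]|.
  rewrite -sum1dep_card [RHS]big_mkcond.
  by apply: eq_bigr => i _; case: (~~ col_up i).
move: sum_succ; rewrite (sum_ordS (fun i => val (c i))) !big_split /= sum_down.
rewrite sum1_card card_ord => /eqP.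
by rewrite -[X in X %% 3 == _]addn0 eqn_modDl mod0n eq_sym.
Qed.

Lemma rainbow_succ i : rainbow_k E c set0 (s i) = (col_up i == col_up (s i)).
Proof.
rewrite rainbow_cycleE // !inE /= !andbT ordSK -val_eqE.
have := val_col_succ i; have := val_col_succ (s i).
case: (col_up i) (col_up (s i)) => [] [];
  case: (c i) (c (s i)) (c (s (s i))) => [x ?] [y ?] [z ?] /= -> ->; lia.
Qed.

Lemma r_count_cycle_ge3 : 3 <= r_count_k E c set0.
Proof.
rewrite /r_count_k -(card_preimset _ (@ordS_inj n)).
rewrite (_ : s @^-1: _ = [set i | col_up i == col_up (s i)]).
  exact: cycle_agreements_ge3 col_down_dvd3.
by apply/setP => i; rewrite !inE rainbow_succ.
Qed.

End ProperColouring.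

Lemma cycle_fade_le (c : {ffun 'I_n -> 'I_3}) F : proper_col E c ->
  r_count_k E c F = r_count_k E c set0 -> #|F| <= n - minn n 5.
Proof.
move=> c_proper same_count; set R := [set v | rainbow_k E c set0 v].
have nbhd_unfaded : cycle_nbhd R \subset ~: F.
  have unfaded v : v \in R -> [&& p v \notin F, v \notin F & s v \notin F].
    rewrite /R -(rainbow_set_fade same_count) inE rainbow_cycleE //.
    by case/and4P => _ -> -> ->.
  apply/subsetP => u; rewrite [u \in ~: F]inE /cycle_nbhd.
  by case/setUP => [/setUP [/unfaded|/imsetP [v /unfaded + ->]]|/imsetP [v /unfaded + ->]];
    case/and3P.
have nbhd_ge : minn n 5 <= #|cycle_nbhd R|.
  exact: card_cycle_nbhd (r_count_cycle_ge3 c_proper).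
have := subset_leq_card nbhd_unfaded; rewrite [#|~: F|]cardsCs setCK card_ord; lia.
Qed.

Lemma f_minus_cycle_le : f_minus_k E 3 <= n - minn n 5.
Proof.
apply/bigmax_leqP => c /andP [c_proper /eqP c_min].
apply/bigmax_leqP => F /eqP F_min.
by apply: (cycle_fade_le c_proper); rewrite F_min c_min.
Qed.

Definition vtx0 : 'I_n := Ordinal (leq_trans (isT : 0 < 3) n_ge3).

Lemma val_pred_vtx0 : val (p vtx0) = n.-1.
Proof. by rewrite val_ord_pred. Qed.

Lemma val_pred2_vtx0 : val (p (p vtx0)) = n.-2.
Proof. by rewrite val_ord_pred val_pred_vtx0; case: eqP; lia. Qed.

Definition alt_rainbow : {set 'I_n} := [set v in [:: p (p vtx0); p vtx0; vtx0]].

Lemma alt_col_rainbow v : rainbow_k E alt_col set0 v = (v \in alt_rainbow).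
Proof.
rewrite rainbow_cycleE ?alt_col_proper // !inE /= !andbT -!val_eqE !val_alt_col.
rewrite val_pred_vtx0 val_pred2_vtx0; move: (val_ord_pred v) (val_ordS v).
case: v (p v) (s v) => [w ?] [a ?] [b ?] /=.
by repeat (case: ifP => /eqP ?); lia.
Qed.

Definition alt_fade : {set 'I_n} := ~: cycle_nbhd alt_rainbow.

Lemma card_alt_fade : n - 5 <= #|alt_fade|.
Proof.
have nbhd_sub : cycle_nbhd alt_rainbow \subset
    [set v in [:: p (p (p vtx0)); p (p vtx0); p vtx0; vtx0; s vtx0]].
  apply/subsetP => u; rewrite !inE.
  by case/orP => [/orP [|/imsetP [v + ->]]|/imsetP [v + ->]]; rewrite ?inE;
    case/or3P => /eqP ->; rewrite ?ord_predK eqxx ?orbT.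
have nbhd_le5 : #|cycle_nbhd alt_rainbow| <= 5.
  by apply: leq_trans (subset_leq_card nbhd_sub) _; rewrite cardsE card_size.
by have := cardsC (cycle_nbhd alt_rainbow); rewrite card_ord /alt_fade; lia.
Qed.

Lemma r_count_alt_col : r_count_k E alt_col set0 = 3.
Proof.
apply/anti_leq; rewrite r_count_cycle_ge3 ?alt_col_proper // andbT.
rewrite /r_count_k (_ : [set v | _] = alt_rainbow) ?cardsE ?card_size //.
by apply/setP => v; rewrite inE alt_col_rainbow.
Qed.

Lemma r_minus_cycle : r_minus_k E 3 = 3.
Proof.
apply/anti_leq/andP; split.
  by rewrite -[X in _ <= X]r_count_alt_col r_minus_k_le // alt_col_proper.
by apply: r_minus_k_ge; [rewrite card_ord | apply: r_count_cycle_ge3].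
Qed.

Lemma r_count_alt_fade : r_count_k E alt_col alt_fade = 3.
Proof.
rewrite -[RHS]r_count_alt_col /r_count_k; apply: eq_card => v; rewrite !inE.
have [R0v|not_R0v] := boolP (rainbow_k E alt_col set0 v).
  rewrite rainbow_k_unfaded // => u vu; rewrite inE negbK.
  by apply: closed_nbr_cycle_nbhd vu; rewrite -alt_col_rainbow.
by apply/negbTE; apply: contra not_R0v; apply: rainbow_k_fade.
Qed.

Lemma f_minus_cycle_ge : n - 5 <= f_minus_k E 3.
Proof.
apply: leq_trans card_alt_fade (leq_f_minus_k alt_col_proper _ _).
  by rewrite r_count_alt_col r_minus_cycle.
by rewrite r_count_alt_fade r_minus_cycle.
Qed.

Lemma f_minus_cycle_bounds : n - 5 <= f_minus E <= n - minn n 5.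
Proof. by rewrite f_minus_chi chi_cycle f_minus_cycle_ge f_minus_cycle_le. Qed.

End Cycle.

Theorem proposition2p2 :
  f_minus (cycle_rel 3) = 0 /\ f_minus (cycle_rel 5) = 0 /\
  (forall n : nat, odd n -> 7 <= n -> f_minus (cycle_rel n) = n - 5).
Proof.
split; [|split].
- by have /andP [_] := @f_minus_cycle_bounds 3 isT isT; rewrite leqn0 => /eqP.
- by have /andP [_] := @f_minus_cycle_bounds 5 isT isT; rewrite leqn0 => /eqP.
move=> n n_odd n_ge7; have n_ge3 : 3 <= n by apply: leq_trans n_ge7.
by have /andP := f_minus_cycle_bounds n_ge3 n_odd; lia.
Qed.
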